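(* Let $X$ be an $X$-set parameter, let $G$ be a graph, and let $R\subseteq V(G)$. Then the map $\nu_R$, $\nu_R(S)=S\ominus R$, is a graph automorphism of $\mathscr{X}^{\rm TAR}(G)$ if and only if $R$ is $X$-irrelevant.
   Context: All graphs are simple, finite, with nonempty vertex set. An $X$-set parameter is a graph parameter $X(G)$ defined as the minimum cardinality of an $X$-set of $G$, where the $X$-sets of each graph are subsets of its vertex set determined by some property satisfying: (1) supersets (within $V(G)$) of $X$-sets are $X$-sets; (2) the empty set is never an $X$-set; (3) an $X$-set of a disconnected graph is the union of an $X$-set of each component; (4) if $G$ has no isolated vertices, every set of $|V(G)|-1$ vertices is an $X$-set. The $X$-TAR graph $\mathscr{X}^{\rm TAR}(G)$ has as vertices all $X$-sets of $G$, with $S_1,S_2$ adjacent iff $|S_1\ominus S_2|=1$ (symmetric difference). The map $\nu_R$ is defined on the vertices of $\mathscr{X}^{\rm TAR}(G)$ with values in the power set of $V(G)$. A vertex $v$ of $G$ is $X$-irrelevant if $v\notin S$ for every minimal $X$-set $S$ of $G$; a set $R$ is $X$-irrelevant if all its vertices are $X$-irrelevant. *)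

From mathcomp Require Import all_boot.
Set Implicit Arguments. Unset Strict Implicit. Unset Printing Implicit Defensive.

Definition simple_graph (T : finType) (e : rel T) : Prop :=
  [/\ symmetric e, irreflexive e & 0 < #|T|].

Definition symdiff (T : finType) (A B : {set T}) : {set T} :=
  (A :\: B) :|: (B :\: A).

Definition ivert (T : finType) (C : {set T}) : finType := {x : T | x \in C}.

Definition induced (T : finType) (e : rel T) (C : {set T}) : rel (ivert C) :=
  fun x y => e (val x) (val y).
Arguments induced {T} e C.

Definition comp (T : finType) (e : rel T) (x : T) : {set T} :=
  [set y | connect e x y].

Record XParam := {
  Xset : forall T : finType, rel T -> {set T} -> bool;
  Xset_iso : forall (T T' : finType) (e : rel T) (e' : rel T') (f : T -> T'),
      simple_graph e -> bijective f -> (forall x y, e' (f x) (f y) = e x y) ->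
      forall S : {set T}, Xset e' (f @: S) = Xset e S;
  Xset_super : forall (T : finType) (e : rel T) (S S' : {set T}),
      simple_graph e -> Xset e S -> S \subset S' -> Xset e S';
  Xset_nonempty : forall (T : finType) (e : rel T),
      simple_graph e -> ~~ Xset e set0;
  Xset_components : forall (T : finType) (e : rel T),
      simple_graph e -> (exists x y, ~~ connect e x y) ->
      forall S : {set T},
        Xset e S <->
        (forall x : T, Xset (induced e (comp e x)) [set y | val y \in S]);
  Xset_no_isolated : forall (T : finType) (e : rel T),
      simple_graph e -> (forall x, exists y, e x y) ->
      forall S : {set T}, #|S| = #|T|.-1 -> Xset e S
}.

Definition TARvert (X : XParam) (T : finType) (e : rel T) : finType :=
  {S : {set T} | Xset X e S}.

Definition TARadj (X : XParam) (T : finType) (e : rel T) : rel (TARvert X e) :=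
  fun S1 S2 => #|symdiff (val S1) (val S2)| == 1.
Arguments TARadj X {T} e.

Definition graph_aut (V : finType) (adj : rel V) (f : V -> V) : Prop :=
  bijective f /\ forall x y, adj (f x) (f y) = adj x y.

Definition nuR_is_aut (X : XParam) (T : finType) (e : rel T) (R : {set T}) : Prop :=
  exists f : TARvert X e -> TARvert X e,
    graph_aut (TARadj X e) f /\ forall S, val (f S) = symdiff (val S) R.

Definition Xirrelevant_vertex (X : XParam) (T : finType) (e : rel T) (v : T) :=
  forall M : {set T}, minset (Xset X e) M -> v \notin M.

Definition Xirrelevant (X : XParam) (T : finType) (e : rel T) (R : {set T}) :=
  forall v, v \in R -> Xirrelevant_vertex X e v.

From mathcomp Require Import all_boot.

(* Since S1 ⊖ S2 is unchanged when both sides are shifted by R, the map S ↦ S ⊖ R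
   is an involutive isometry of the symmetric-difference metric; it is thus an
   automorphism of the X-TAR graph exactly when it preserves X-sets.  If R avoids
   every minimal X-set M ⊆ S, then M ⊆ S ⊖ R, so S ⊖ R is an X-set.  Conversely,
   if a minimal X-set M meets R, then (M ∪ R) ⊖ R = M \ R is an X-set strictly
   inside M. *)

Lemma symdiffK (T : finType) (R : {set T}) :
  involutive (fun S : {set T} => symdiff S R).
Proof.
move=> S; apply/setP => x; rewrite /symdiff !inE.
by case: (x \in S); case: (x \in R).
Qed.

Lemma symdiff2r (T : finType) (S1 S2 R : {set T}) :
  symdiff (symdiff S1 R) (symdiff S2 R) = symdiff S1 S2.
Proof.
apply/setP => x; rewrite /symdiff !inE.
by case: (x \in S1); case: (x \in S2); case: (x \in R).
Qed.

Lemma symdiffUl (T : finType) (S R : {set T}) : symdiff (S :|: R) R = S :\: R.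
Proof.
apply/setP => x; rewrite /symdiff !inE.
by case: (x \in S); case: (x \in R).
Qed.

Section SymdiffShift.

Variables (X : XParam) (T : finType) (e : rel T) (R : {set T}).

Definition Xset_symdiff_closed : Prop :=
  forall S : {set T}, Xset X e S -> Xset X e (symdiff S R).

Lemma nuR_is_autP : nuR_is_aut X e R <-> Xset_symdiff_closed.
Proof.
split=> [[f [_ val_f]] S XS | closedR].
  by rewrite -(val_f (exist _ S XS)); apply: valP.
pose f (S : TARvert X e) : TARvert X e := exist (Xset X e) _ (closedR _ (valP S)).
exists f; split=> //; split.
  by exists f => S; apply: val_inj; rewrite /= symdiffK.
by move=> S1 S2; rewrite /TARadj /= symdiff2r.
Qed.

Hypothesis HG : simple_graph e.

Lemma Xirrelevant_symdiff_closed :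
  Xirrelevant X e R -> Xset_symdiff_closed.
Proof.
move=> irrR S XS; have [M minM sMS] := minset_exists XS.
apply: (Xset_super HG (minsetP minM).1); apply/subsetP => x xM.
have xNR : x \notin R by apply: contraL xM => xR; apply: irrR.
by rewrite /symdiff !inE (subsetP sMS) ?(negbTE xNR).
Qed.

Lemma symdiff_closed_Xirrelevant :
  Xset_symdiff_closed -> Xirrelevant X e R.
Proof.
move=> closedR v vR M /minsetP[XM minM]; apply/negP => vM.
have XMR : Xset X e (M :|: R) by apply: Xset_super HG XM (subsetUl M R).
have := closedR _ XMR; rewrite symdiffUl => XMdR.
have /setP/(_ v) := minM _ XMdR (subsetDl M R).
by rewrite !inE vR vM.
Qed.

End SymdiffShift.

Theorem theorem2p8 (X : XParam) (T : finType) (e : rel T)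
    (HG : simple_graph e) (R : {set T}) :
  nuR_is_aut X e R <-> Xirrelevant X e R.
Proof.
split=> [/nuR_is_autP | irrR]; first exact: symdiff_closed_Xirrelevant.
by apply/nuR_is_autP; apply: Xirrelevant_symdiff_closed.
Qed.
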